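(* Let $n$ be a positive integer. If $\Phi(n)^{\Phi(n)}\equiv 1\pmod n$ or $\Lambda(n)^{\Lambda(n)}\equiv 1 \pmod n$, then $n$ is $G$-cyclic.
   Context: For a positive integer $n$, $\mathcal{G}_n=\{a+bi\in\mathbb{Z}[i]/n\mathbb{Z}[i] : a^2+b^2\equiv 1\pmod n\}$ (a multiplicative group), $\Phi(n)=|\mathcal{G}_n|$, and $\Lambda(n)$ is the exponent of $\mathcal{G}_n$. An integer $n\ge 1$ is $G$-cyclic if $\gcd(\Phi(n),n)=1$. *)

From mathcomp Require Import all_boot.
Set Implicit Arguments. Unset Strict Implicit. Unset Printing Implicit Defensive.

(* Z[i]/nZ[i] is modelled as pairs (a,b) of residues mod n (a + b i),
   with a, b : 'I_n.  Arithmetic is done on nat representatives mod n. *)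

(* multiplication in Z[i]/nZ[i]: (a+bi)(c+di) = (ac - bd) + (ad + bc) i,
   where -bd is represented by (n-1)*bd mod n *)
Definition gmul (n : nat) (x y : nat * nat) : nat * nat :=
  ((x.1 * y.1 + (n - 1) * (x.2 * y.2)) %% n, (x.1 * y.2 + x.2 * y.1) %% n).

Definition gone (n : nat) : nat * nat := (1 %% n, 0).

Definition gpow (n : nat) (x : nat * nat) (m : nat) : nat * nat :=
  iter m (gmul n x) (gone n).

Definition Gn (n : nat) : {set 'I_n * 'I_n} :=
  [set x : 'I_n * 'I_n | ((val x.1) ^ 2 + (val x.2) ^ 2 == 1 %[mod n])].

Definition Phi (n : nat) : nat := #|Gn n|.

Definition is_exponent_Gn (n L : nat) : Prop :=
  0 < L /\
  (forall x, x \in Gn n -> gpow n (val x.1, val x.2) L = gone n) /\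
  (forall m, 0 < m -> (forall x, x \in Gn n -> gpow n (val x.1, val x.2) m = gone n) -> L <= m).

Definition G_cyclic (n : nat) : bool := coprime (Phi n) n.

From HB Require Import structures.
From mathcomp Require Import all_boot all_algebra all_fingroup all_solvable.
From mathcomp Require Import ring.
Set Implicit Arguments. Unset Strict Implicit. Unset Printing Implicit Defensive.
Import GRing.Theory.

(* For n >= 2 the set G_n is a finite group under Gaussian
   multiplication: realise it inside the ring 'Z_n as the pairs (a, b) with
   a^2 + b^2 = 1, where multiplicativity is the two-squares identity
   (a^2+b^2)(c^2+d^2) = (ac-bd)^2 + (ad+bc)^2 and (a, -b) is the inverse.
   By Cauchy's theorem every prime p dividing Phi(n) = |G_n| is the order of
   some element, hence divides the exponent Lambda(n).  On the arithmetic
   side, a^k = 1 (mod n) with k > 0 forces gcd(a, n) = 1.  So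
   Phi^Phi = 1 (mod n) gives gcd(Phi, n) = 1 at once, while
   Lambda^Lambda = 1 (mod n) gives gcd(Lambda, n) = 1, which transfers to
   Phi since every prime divisor of Phi divides Lambda. *)

Lemma coprime_of_pow_eq1 a k n : 0 < k -> a ^ k = 1 %[mod n] -> coprime a n.
Proof.
move=> k_gt0 akE.
by rewrite -(coprime_pexpl _ _ k_gt0) -coprime_modl akE coprime_modl coprime1n.
Qed.

Lemma coprime_of_prime_divisors a b n : 0 < a -> 0 < b -> 0 < n ->
  (forall p, prime p -> p %| a -> p %| b) -> coprime b n -> coprime a n.
Proof.
move=> a_gt0 b_gt0 n_gt0 pa_pb; rewrite !coprime_pi' //.
apply: sub_in_pnat => p /[!mem_primes] /and3P[p_pr _ _]; apply: contra.
by rewrite !mem_primes p_pr a_gt0 b_gt0 /= => /pa_pb->.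
Qed.

Section GaussianCircleGroup.

Variable m : nat.
Local Notation n := m.+2.

Lemma val_natr k : val (k%:R : 'I_n)%R = k %% n.
Proof. by rewrite Zp_nat. Qed.

Lemma Gn_ring (x : 'I_n * 'I_n) : (x \in Gn n) = (x.1 * x.1 + x.2 * x.2 == 1)%R.
Proof.
rewrite inE -[x.1 in RHS]natr_Zp -[x.2 in RHS]natr_Zp -!natrM -natrD.
by rewrite -val_eqE val_natr /= !mulnn.
Qed.

Definition zmul (u v : 'I_n * 'I_n) : 'I_n * 'I_n :=
  (u.1 * v.1 - u.2 * v.2, u.1 * v.2 + u.2 * v.1)%R.

Definition natpair (u : 'I_n * 'I_n) : nat * nat := (val u.1, val u.2).

Lemma natpair_zmul u v : natpair (zmul u v) = gmul n (natpair u) (natpair v).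
Proof.
have minus_one : (((n - 1)%:R : 'I_n) = -1)%R.
  apply/eqP; rewrite -subr_eq0 opprK subn1 /= natr1.
  by rewrite -val_eqE val_natr modnn.
rewrite /natpair /gmul; congr pair; rewrite -val_natr; apply: (congr1 val).
  by rewrite /zmul natrD !natrM minus_one !natr_Zp mulN1r.
by rewrite /zmul natrD !natrM !natr_Zp.
Qed.

Definition circle := {x : 'I_n * 'I_n | x \in Gn n}.

(* The two-squares identity: G_n is closed under multiplication. *)
Lemma zmul_closed (x y : circle) : zmul (val x) (val y) \in Gn n.
Proof.
case: x y => [[a b] /= xG] [[c d] /= yG]; move: xG yG.
rewrite !Gn_ring /zmul /= => /eqP xE /eqP yE; apply/eqP.
by transitivity ((a * a + b * b) * (c * c + d * d))%R; [ring | rewrite xE yE mulr1].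
Qed.

Lemma one_closed : ((1, 0) : 'I_n * 'I_n)%R \in Gn n.
Proof. by rewrite Gn_ring /= mulr0 addr0 mulr1. Qed.

Lemma conj_closed (x : circle) : ((val x).1, - (val x).2)%R \in Gn n.
Proof. by case: x => [[a b] /=]; rewrite !Gn_ring /= mulrNN. Qed.

Local Notation in_circle := (exist (fun z => z \in Gn n) _).

Definition circle_mul (x y : circle) : circle := in_circle (zmul_closed x y).
Definition circle_one : circle := in_circle one_closed.
Definition circle_inv (x : circle) : circle := in_circle (conj_closed x).

Lemma circle_mulA : associative circle_mul.
Proof.
by move=> [[a b] ?] [[c d] ?] [[e f] ?]; apply: val_inj; congr pair; rewrite /=; ring.
Qed.

Lemma circle_mul1 : left_id circle_one circle_mul.
Proof. by move=> [[a b] ?]; apply: val_inj; congr pair; rewrite /=; ring. Qed.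

(* The inverse is the conjugate, because a^2 + b^2 = 1. *)
Lemma circle_mulV : left_inverse circle_one circle_inv circle_mul.
Proof.
move=> [[a b] xG]; apply: val_inj; rewrite /= /zmul /=.
move: xG; rewrite Gn_ring /= => /eqP xE.
by congr pair; rewrite /= ?(esym xE); ring.
Qed.

HB.instance Definition _ := Finite.copy circle circle.
HB.instance Definition _ :=
  Finite_isGroup.Build circle circle_mulA circle_mul1 circle_mulV.

Lemma card_circle : #|[set: circle]| = Phi n.
Proof. by rewrite cardsT card_sig. Qed.

Lemma natpair_expg (x : circle) k :
  natpair (val (x ^+ k)%g) = gpow n (natpair (val x)) k.
Proof.
elim: k => [|k IHk]; first by rewrite expg0 /gpow /= /natpair /= modn_small.
by rewrite expgS /gpow iterS -/(gpow _ _ _) -IHk -natpair_zmul.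
Qed.

Lemma expg_exponent L (x : circle) : is_exponent_Gn n L -> (x ^+ L = 1)%g.
Proof.
case=> _ [annihilates _]; apply: val_inj.
have := annihilates _ (valP x); rewrite -[gpow _ _ _](natpair_expg x L).
case: (val (x ^+ L)%g) => a b; rewrite /gone /natpair /= modn_small // => -[aE bE].
by congr pair; apply: val_inj.
Qed.

(* Cauchy: every prime divisor of Phi(n) is an element order, so divides Lambda(n). *)
Lemma prime_dvd_Phi_exponent L p :
  is_exponent_Gn n L -> prime p -> p %| Phi n -> p %| L.
Proof.
move=> L_exp p_pr; rewrite -card_circle => /(Cauchy p_pr)[x _ <-].
by rewrite order_dvdn expg_exponent.
Qed.

Lemma Phi_gt0 : 0 < Phi n.
Proof. by rewrite -card_circle; apply/card_gt0P; exists 1%g; rewrite inE. Qed.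

End GaussianCircleGroup.

Theorem mainTheorem13 (n : nat) (hn : 0 < n) (Lambda : nat)
  (hL : is_exponent_Gn n Lambda) :
  (Phi n ^ Phi n = 1 %[mod n] \/ Lambda ^ Lambda = 1 %[mod n]) ->
  G_cyclic n.
Proof.
case: n hn hL => [//|[|m]] _ L_exp; first by rewrite /G_cyclic coprimen1.
have Phi_pos := Phi_gt0 m; have [L_pos _] := L_exp.
rewrite /G_cyclic => -[PhiE | LE].
  exact: coprime_of_pow_eq1 Phi_pos PhiE.
apply: (coprime_of_prime_divisors Phi_pos L_pos) => //.
  by move=> p; apply: prime_dvd_Phi_exponent.
exact: coprime_of_pow_eq1 L_pos LE.
Qed.
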